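(* Let $F$ be a Ferrers diagram of semiperimeter $n+1$ and $T\in\mathsf{EWtab}(F)$. For $j\in[1,n]$ let $\nu_j(T)$ be the number of non-cornersupport $0$s in the row labeled $j$ of $T$ if $j\in\mathsf{rows}(F)$, and the number of non-cornersupport $1$s in the column labeled $j$ of $T$ if $j\in\mathsf{cols}(F)$. Then $\nu_j(T)=\mu_j(\phi_{TC}(T))$ for all $j\in[1,n]$.
   Context: Ferrers diagrams and graphs: a Ferrers diagram $F$ (English convention) of semiperimeter $n+1$ has rows and columns labeled by $0,\ldots,n$: the $n+1$ unit steps of its south-east boundary path, traversed from top-right to bottom-left, are labeled $0,\ldots,n$; a vertical step labels the row it bounds, a horizontal step the column it bounds (top row labeled $0$). $\mathsf{rows}(F)$, $\mathsf{cols}(F)$ are the label sets; $F$ has a cell in row $i$, column $j$ iff $i<j$. $G(F)$ has vertex set $\{0,\ldots,n\}$ with edges $\{i,j\}$ for $i\in\mathsf{rows}(F)$, $j\in\mathsf{cols}(F)$, $i<j$. Sandpile model on $G(F)$ with sink $0$: configurations $c\in\mathbb{N}^n$; non-sink $v$ unstable if $c_v\ge\deg(v)$; toppling sends one grain to each neighbour (grains to $0$ disappear); toppling the sink adds one grain to each neighbour of $0$. Recurrent: stable configurations obtainable from $c_v=\deg(v)-1$ by adding grains and stabilizing; $\mathsf{Rec}^{\mathsf{min}}(G)$: recurrent configurations of minimal total grain count. Canonical toppling of a recurrent $c$: topple the sink ($U^{(0)}_c=\{0\}$), then alternately topple simultaneously all unstable vertices in $\mathsf{cols}(F)$ ($V^{(1)}_c$),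 all unstable in $\mathsf{rows}(F)$ ($U^{(1)}_c$), etc.; $\mathsf{CanonTop}(c)=(U^{(0)}_c,V^{(1)}_c,U^{(1)}_c,\ldots)$ is an ordered partition of $\{0,\ldots,n\}$. For $c\in\mathsf{Rec}^{\mathsf{min}}(G(F))$ and $j\in[1,n]$: $\mu_j(c)=|\{k\in V^{(\ell)}_c: k>j\}|$ if $j\in U^{(\ell)}_c$, and $\mu_j(c)=|\{k\in U^{(\ell-1)}_c: k<j\}|$ if $j\in V^{(\ell)}_c$. EW-tableaux: $0/1$-fillings $T$ of $F$ ($T_{ij}$ = entry in row $i$, column $j$) with top row all 1s, a 0 in every other row, and no rectangle with 0s in two diagonally opposite corners and 1s in the other two; $\mathsf{EWtab}(F)$ is their set. $\phi_{TC}(T)$ is the configuration with $c_i$ = number of 1s in row $i$ ($i\in\mathsf{rows}(F)$), $c_i$ = number of 0s in column $i$ ($i\in\mathsf{cols}(F)$); it lies in $\mathsf{Rec}^{\mathsf{min}}(G(F))$. $\mathsf{CanonTop}(T):=\mathsf{CanonTop}(\phi_{TC}(T))$. Supplementary tableau $S=S(T)$: the $|\mathsf{rows}(F)|\times|\mathsf{cols}(F)|$ array with $S_{ij}=1$ if row label $i$ lies in an earlier block of $\mathsf{CanonTop}(T)$ than column label $j$, else $0$ (agrees with $T$ on cells of $F$). An entry $x$ of $T$ at $(j,k)$ is a cornersupport entry iff there exist a row $j'\ne j$ and column $k'\ne k$ with $S_{j'k'}\ne x$ and $S_{j'k}=S_{jk'}=x$. *)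

From mathcomp Require Import all_boot.
Set Implicit Arguments. Unset Strict Implicit. Unset Printing Implicit Defensive.

(* A Ferrers diagram F of semiperimeter n+1 is encoded by (n, r) where
   r : nat -> bool says, for each label i in [0, n], whether the i-th step of
   the south-east boundary path is vertical (r i = true: i is a row label)
   or horizontal (r i = false: i is a column label). *)

Definition cell (n : nat) (r : nat -> bool) (i j : nat) : bool :=
  [&& r i, ~~ r j, i < j & j <= n].

Definition adj (n : nat) (r : nat -> bool) (v w : nat) : bool :=
  [&& v <= n, w <= n &
      (r v && ~~ r w && (v < w)) || (r w && ~~ r v && (w < v))].

Definition deg (n : nat) (r : nat -> bool) (v : nat) : nat :=
  count (adj n r v) (iota 0 n.+1).

(* Configurations on the vertices 0..n are stored as sequences of length
   n+1 (entry v = number of grains on v; the entry at the sink 0 is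
   irrelevant). *)
Definition topple (n : nat) (r : nat -> bool) (S : pred nat) (d : seq nat)
  : seq nat :=
  [seq (if S v then nth 0 d v - deg n r v else nth 0 d v)
       + count (fun w => S w && adj n r v w) (iota 0 n.+1) | v <- iota 0 n.+1].

(* Step t of the canonical toppling: step 0 topples the sink; odd steps
   topple all unstable non-sink column vertices, even steps t >= 2 all
   unstable non-sink row vertices. *)
Definition canon_set (n : nat) (r : nat -> bool) (t : nat) (d : seq nat)
  : pred nat :=
  if t is 0 then pred1 0
  else fun v => [&& 0 < v, v <= n, r v == ~~ odd t & deg n r v <= nth 0 d v].

Fixpoint conf (n : nat) (r : nat -> bool) (c : nat -> nat) (t : nat)
  : seq nat :=
  match t with
  | 0 => mkseq c n.+1
  | t'.+1 => let d := conf n r c t' in topple n r (canon_set n r t' d) d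
  end.

(* The t-th block of CanonTop(c): block 0 = U^(0) = {0},
   block (2l-1) = V^(l), block (2l) = U^(l). *)
Definition block (n : nat) (r : nat -> bool) (c : nat -> nat) (t : nat)
  : pred nat := canon_set n r t (conf n r c t).

Definition Ublk n r c (l : nat) : pred nat := block n r c (2 * l).
Definition Vblk n r c (l : nat) : pred nat := block n r c (2 * l).-1.

Definition blk (n : nat) (r : nat -> bool) (c : nat -> nat) (v : nat) : nat :=
  find (fun t => block n r c t v) (iota 0 (2 * n + 3)).

Definition mu (n : nat) (r : nat -> bool) (c : nat -> nat) (j : nat) : nat :=
  let t := blk n r c j in
  if ~~ odd t then (* j in U^(l), l = t/2 *)
    count (fun k => Vblk n r c t./2 k && (j < k)) (iota 0 n.+1)
  else (* j in V^(l), l = (t+1)/2 *)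
    count (fun k => Ublk n r c (t.+1./2 - 1) k && (k < j)) (iota 0 n.+1).

(* EW-tableaux: T i j is the entry in row i, column j (meaningful on cells). *)
Definition EWtab (n : nat) (r : nat -> bool) (T : nat -> nat -> bool) : Prop :=
  (forall j, cell n r 0 j -> T 0 j) /\
  (forall i, 0 < i <= n -> r i -> exists j, cell n r i j /\ ~~ T i j) /\
  (forall i i' j j', i < i' -> j < j' ->
     cell n r i j -> cell n r i j' -> cell n r i' j -> cell n r i' j' ->
     ~ ((~~ T i j && ~~ T i' j' && T i j' && T i' j) ||
        (T i j && T i' j' && ~~ T i j' && ~~ T i' j))).

Definition phiTC (n : nat) (r : nat -> bool) (T : nat -> nat -> bool)
  : nat -> nat :=
  fun v => if r v then count (fun j => cell n r v j && T v j) (iota 0 n.+1)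
           else count (fun i => cell n r i v && ~~ T i v) (iota 0 n.+1).

Definition supp (n : nat) (r : nat -> bool) (T : nat -> nat -> bool)
  (i j : nat) : bool :=
  blk n r (phiTC n r T) i < blk n r (phiTC n r T) j.

Definition cornersupport (n : nat) (r : nat -> bool) (T : nat -> nat -> bool)
  (j k : nat) : bool :=
  let x := T j k in
  has (fun j' => has (fun k' =>
        [&& r j', j' != j, ~~ r k', k' != k,
            supp n r T j' k' != x, supp n r T j' k == x
          & supp n r T j k' == x]) (iota 0 n.+1)) (iota 0 n.+1).

Definition nu (n : nat) (r : nat -> bool) (T : nat -> nat -> bool) (j : nat)
  : nat :=
  if r j then
    count (fun k => cell n r j k && ~~ T j k && ~~ cornersupport n r T j k)
          (iota 0 n.+1)
  else
    count (fun i => cell n r i j && T i j && ~~ cornersupport n r T i j)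
          (iota 0 n.+1).

(* A 0/1-filling T of F orients the Ferrers graph: a 1 in cell (i, k) is an arc
   from row i to column k, a 0 an arc from k to i.  For an EW-tableau this
   orientation is acyclic, and phiTC(T) puts on every vertex as many grains as it
   has out-arcs, so a vertex becomes unstable exactly when all its in-neighbours
   have toppled.  Hence the canonical toppling topples every vertex once, along
   the orientation: T i k = 1 iff row i lies in an earlier block than column k,
   and each non-sink vertex has a neighbour in the block just before its own.
   An entry is then a cornersupport entry iff the blocks of its row and column
   are not consecutive, so nu_j and mu_j both count the in-neighbours of j in
   the block preceding that of j. *)

From mathcomp Require Import all_boot.
From mathcomp Require Import zify.
Set Implicit Arguments. Unset Strict Implicit. Unset Printing Implicit Defensive.

Section CountIn.
Variable A : eqType.
Implicit Types (a b : pred A) (s : seq A).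

Lemma sub_in_count a b s : {in s, subpred a b} -> count a s <= count b s.
Proof.
elim: s => //= x s IH sab.
apply: leq_add; last by apply: IH => y ys; apply: sab; rewrite inE ys orbT.
by case ax: (a x); rewrite // sab ?mem_head.
Qed.

Lemma sub_in_count_ltn a b s :
  {in s, subpred a b} -> has (predD b a) s -> count a s < count b s.
Proof.
elim: s => //= x s IH sab.
have sab' : {in s, subpred a b} by move=> y ys; apply: sab; rewrite inE ys orbT.
have abx : a x <= b x by case ax: (a x); rewrite // sab ?mem_head.
case/orP => [/andP [/negbTE -> ->] | /(IH sab') lt]; last by rewrite -addnS leq_add.
by rewrite add0n add1n ltnS sub_in_count.
Qed.

Lemma ltn_count_has a b s : count a s < count b s -> has (predD b a) s.
Proof.
apply: contraTT => /hasPn nba; rewrite -leqNgt; apply: sub_in_count => x xs bx.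
by move: (nba x xs); rewrite /= bx andbT negbK.
Qed.

Lemma sub_in_count_eq a b s :
  {in s, subpred a b} -> count b s <= count a s -> {in s, subpred b a}.
Proof.
move=> sab le x xs bx; apply/negPn/negP => nax.
suff: count a s < count b s by rewrite ltnNge le.
by apply: sub_in_count_ltn sab _; apply/hasP; exists x; rewrite //= nax.
Qed.

End CountIn.

Section FerrersOrientation.
Variables (n : nat) (r : nat -> bool) (T : nat -> nat -> bool).

Lemma adj_sym u v : adj n r u v = adj n r v u.
Proof. by rewrite /adj andbCA orbC. Qed.

Lemma adj_le u v : adj n r u v -> (u <= n) && (v <= n).
Proof. by case/and3P => -> ->. Qed.

Lemma adj_r u v : adj n r u v -> r u = ~~ r v.
Proof. by rewrite /adj; case: (r u); case: (r v); rewrite ?andbF. Qed.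

Definition arc u v := (cell n r u v && T u v) || (cell n r v u && ~~ T v u).

Lemma arc_row i k : r i -> arc i k = cell n r i k && T i k.
Proof. by move=> ri; rewrite /arc {2}/cell ri /= andbF orbF. Qed.

Lemma arc_col i k : ~~ r k -> arc i k = cell n r i k && T i k.
Proof. by move=> rk; rewrite /arc {2}/cell (negbTE rk) /= orbF. Qed.

Lemma arc_rowV k i : r i -> arc k i = cell n r i k && ~~ T i k.
Proof. by move=> ri; rewrite /arc {1}/cell ri /= andbF. Qed.

Lemma arc_colV k i : ~~ r k -> arc k i = cell n r i k && ~~ T i k.
Proof. by move=> rk; rewrite /arc {1}/cell (negbTE rk) /=. Qed.

Lemma cell_adj i k : cell n r i k -> adj n r i k.
Proof. by rewrite /adj /cell; lia. Qed.

Lemma adj_arc u v : adj n r u v = arc u v || arc v u.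
Proof. by rewrite /adj /arc /cell; case: (r u); case: (r v) => /=; lia. Qed.

Lemma arc_adj u v : arc u v -> adj n r u v.
Proof. by rewrite adj_arc => ->. Qed.

Lemma arc_asym u v : arc u v -> ~~ arc v u.
Proof. by rewrite /arc /cell; case: (r u); case: (r v) => /=; lia. Qed.

Lemma EWtab_one_above i i' j k : EWtab n r T -> i < i' ->
  cell n r i j -> cell n r i' j -> cell n r i' k -> T i j -> ~~ T i' j -> T i' k -> T i k.
Proof.
move=> [_ [_ EW]] ii' cij ci'j ci'k Tij Ti'j Ti'k; apply/negPn/negP => Tik.
have cik : cell n r i k by move: cij ci'k; rewrite /cell; lia.
case: (ltngtP j k) => [jk | kj | jk]; last by rewrite jk Ti'k in Ti'j.
- by apply: (EW i i' j k); rewrite ?Tij ?Ti'k ?(negbTE Tik) ?(negbTE Ti'j).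
- by apply: (EW i i' k j); rewrite ?Tij ?Ti'k ?(negbTE Tik) ?(negbTE Ti'j).
Qed.

Definition in_arc_closed (X : pred nat) := forall x, X x -> exists2 u, X u & arc u x.

(* An in-neighbour j1 of [im] and an in-neighbour i0 of j1 give T i0 j1 = 1 and
   T im j1 = 0; by the EW condition the row i0 < im inherits every out-arc of [im]. *)
Lemma in_arc_closedD1_max_row (X : pred nat) im : EWtab n r T -> in_arc_closed X ->
  X im -> r im -> (forall i, X i && r i -> i <= im) -> in_arc_closed (predD1 X im).
Proof.
move=> EW closed Xim rim maxim.
have [j1 Xj1] := closed im Xim; rewrite arc_rowV // => /andP [cimj1 Timj1].
have [_ rj1 _ _] := and4P cimj1.
have [i0 Xi0] := closed j1 Xj1; rewrite arc_col // => /andP [ci0j1 Ti0j1].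
have [ri0 _ _ _] := and4P ci0j1.
have i0im : i0 < im.
  rewrite ltn_neqAle maxim ?Xi0 // andbT.
  by apply: contraTneq Ti0j1 => ->.
move=> v /andP [vim Xv]; have [u Xu auv] := closed v Xv.
case: (eqVneq u im) => [uim | uim]; last by exists u; rewrite //= uim.
exists i0; first by rewrite /= Xi0 andbT neq_ltn i0im.
move: auv; rewrite uim arc_row // => /andP [cimv Timv].
have [_ rv imv vn] := and4P cimv.
have ci0v : cell n r i0 v by rewrite /cell ri0 rv vn (ltn_trans i0im imv).
rewrite arc_row // ci0v.
exact: (EWtab_one_above EW i0im ci0j1 cimj1 cimv).
Qed.

Lemma in_arc_closed_empty (X : pred nat) : EWtab n r T ->
  in_arc_closed X -> forall x, ~~ X x.
Proof.
move=> EW; have [m] := ubnP (count X (iota 0 n.+1)).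
elim: m X => // m IH X; rewrite ltnS => cX closed x; apply/negP => Xx.
have Xle y : X y -> y <= n by case/closed=> u _ /arc_adj /adj_le /andP [].
have rowX : exists i, X i && r i.
  case rx: (r x); first by exists x; rewrite Xx.
  have [u Xu /arc_adj /adj_r ru] := closed x Xx.
  by exists u; rewrite Xu ru rx.
have ubX i : X i && r i -> i <= n by case/andP => /Xle.
have [im /andP [Xim rim] maxim] := ex_maxnP rowX ubX.
have [j1 Xj1 aj1] := closed im Xim.
have j1im : j1 != im by apply: contraTneq aj1 => ->; rewrite /arc /cell ltnn !andbF.
have cX' : count (predD1 X im) (iota 0 n.+1) < m.
  apply: leq_trans cX; apply: sub_in_count_ltn; first by move=> y _ /andP [].
  by apply/hasP; exists im; rewrite ?mem_iota /= ?eqxx ?Xim // ltnS Xle.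
have := IH _ cX' (in_arc_closedD1_max_row EW closed Xim rim maxim) j1.
by rewrite /= j1im Xj1.
Qed.

End FerrersOrientation.

Section CanonicalToppling.
Variables (n : nat) (r : nat -> bool) (c : nat -> nat).
Hypothesis c_stable : forall v, 0 < v <= n -> c v < deg n r v.

Local Notation I := (iota 0 n.+1).
Local Notation block := (block n r c).
Local Notation conf := (conf n r c).

Definition toppled t v := has (block^~ v) (iota 0 t).

Definition load t v := c v + count (fun w => toppled t w && adj n r v w) I.

Lemma block_sink t : block t 0 = (t == 0).
Proof. by case: t. Qed.

Lemma block_gt0 t v : 0 < t ->
  block t v = [&& 0 < v, v <= n, r v == ~~ odd t & deg n r v <= nth 0 (conf t) v].
Proof. by case: t. Qed.

Lemma block_le t v : block t v -> v <= n.
Proof. by case: t => [/eqP -> // | t]; rewrite block_gt0 // => /and4P []. Qed.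

Lemma toppledS t v : toppled t.+1 v = toppled t v || block t v.
Proof. by rewrite /toppled -addn1 iotaD has_cat /= orbF. Qed.

Lemma toppled_sink t : toppled t 0 = (0 < t).
Proof. by case: t => // t; rewrite /toppled /= block_sink. Qed.

Lemma toppled_le t v : toppled t v -> v <= n.
Proof. by case/hasP => s _ /block_le. Qed.

Lemma toppled_mono s t v : s <= t -> toppled s v -> toppled t v.
Proof.
move=> st /hasP [u]; rewrite mem_iota /= => us bu.
by apply/hasP; exists u; rewrite // mem_iota /= (leq_trans us st).
Qed.

Lemma count_toppled_adj t v : count (fun w => toppled t w && adj n r v w) I <= deg n r v.
Proof. by apply: sub_count => w /andP []. Qed.

Lemma nth_confS t v : v <= n -> nth 0 (conf t.+1) v =
  (if block t v then nth 0 (conf t) v - deg n r v else nth 0 (conf t) v)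
  + count (fun w => block t w && adj n r v w) I.
Proof. by move=> vn; rewrite /= /topple (nth_map 0) ?size_iota // nth_iota. Qed.

Definition grain_balance t := forall v, 0 < v <= n ->
  nth 0 (conf t) v + (if toppled t v then deg n r v else 0) = load t v.

(* A toppled vertex keeps c v + #(toppled neighbours) - deg v < deg v grains. *)
Lemma grain_balance_not_block t v : grain_balance t -> toppled t v -> ~~ block t v.
Proof.
move=> bal tv; apply/negP => btv; have vn := toppled_le tv.
case: (posnP t) => [t0 | tpos]; first by move: tv; rewrite t0.
case: (posnP v) => [v0 | vpos]; first by rewrite v0 block_sink eqn0Ngt tpos in btv.
have hv : 0 < v <= n by rewrite vpos vn.
move: btv; rewrite block_gt0 // => /and4P [_ _ _ dv].
have := bal v hv; rewrite tv /load.
have := c_stable hv; have := count_toppled_adj t v; lia.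
Qed.

Lemma grain_balance0 : grain_balance 0.
Proof.
move=> v /andP [_ vn]; rewrite /load /toppled /= nth_mkseq ?ltnS //.
by rewrite (eq_count (a2 := pred0)) ?count_pred0.
Qed.

Lemma grain_balanceS t : grain_balance t -> grain_balance t.+1.
Proof.
move=> bal v hv; have /andP [v0 vn] := hv.
have -> : load t.+1 v = load t v + count (fun w => block t w && adj n r v w) I.
  rewrite /load -addnA -count_predUI [count (predI _ _) _](eq_count (a2 := pred0)).
    rewrite count_pred0 addn0; congr (_ + _).
    by apply: eq_count => w; rewrite /= toppledS andb_orl.
  move=> w /=; case: (boolP (toppled t w)) => [tw | //].
  by rewrite (negbTE (grain_balance_not_block bal tw)) andbF.
rewrite nth_confS // toppledS; case btv: (block t v); last first.
  by rewrite orbF; have := bal v hv; lia.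
have tv : toppled t v = false by apply: contraTF btv => /(grain_balance_not_block bal) ->.
have dv : deg n r v <= nth 0 (conf t) v.
  case: (posnP t) btv => [-> | tpos]; first by rewrite /= eqn0Ngt v0.
  by rewrite block_gt0 // => /and4P [].
by have := bal v hv; rewrite tv /=; lia.
Qed.

Lemma grain_balanceP t : grain_balance t.
Proof. by elim: t => [|t]; [exact: grain_balance0 | exact: grain_balanceS]. Qed.

Lemma toppled_not_block t v : toppled t v -> ~~ block t v.
Proof. exact: grain_balance_not_block (grain_balanceP t). Qed.

Lemma blockE t v : 0 < v <= n ->
  block t v = [&& r v == ~~ odd t, ~~ toppled t v & deg n r v <= load t v].
Proof.
move=> hv; case: (boolP (toppled t v)) => tv.
  by rewrite (negbTE (toppled_not_block tv)) andbF.
have := grain_balanceP t hv; rewrite (negbTE tv) addn0 => <-.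
have /andP [v0 vn] := hv.
case: (posnP t) => [-> | tpos]; last by rewrite block_gt0 // v0 vn.
by rewrite /= nth_mkseq ?ltnS // leqNgt c_stable // !andbF eqn0Ngt v0.
Qed.

End CanonicalToppling.

Section EWtabToppling.
Variables (n : nat) (r : nat -> bool) (T : nat -> nat -> bool).
Hypotheses (r0 : r 0) (EW : EWtab n r T).

Local Notation I := (iota 0 n.+1).
Local Notation c := (phiTC n r T).
Local Notation arc := (arc n r T).
Local Notation block := (block n r c).
Local Notation toppled := (toppled n r c).
Local Notation load := (load n r c).
Local Notation bk := (blk n r c).

Lemma deg_arc v : deg n r v = count (arc v) I + count (arc^~ v) I.
Proof.
rewrite -count_predUI [count (predI _ _) _](eq_count (a2 := pred0)) ?count_pred0 ?addn0.
  by apply: eq_count => u; rewrite /= (adj_arc _ _ T).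
by move=> u /=; case: (boolP (arc v u)) => // /arc_asym /negbTE.
Qed.

Lemma phiTC_arc v : c v = count (arc v) I.
Proof.
rewrite /phiTC; case: (boolP (r v)) => rv; apply: eq_count => u.
  by rewrite arc_row.
by rewrite arc_colV.
Qed.

Lemma has_in_arc v : 0 < v <= n -> has (arc^~ v) I.
Proof.
case: EW => EW1 [EW2 _] hv; have /andP [v0 vn] := hv.
case: (boolP (r v)) => rv.
  have [k [cvk Tvk]] := EW2 v hv rv; have [_ _ _ kn] := and4P cvk.
  by apply/hasP; exists k; rewrite ?mem_iota ?ltnS // arc_rowV // cvk.
have c0v : cell n r 0 v by rewrite /cell r0 rv v0 vn.
by apply/hasP; exists 0; rewrite ?mem_iota // arc_col // c0v EW1.
Qed.

Lemma phiTC_stable v : 0 < v <= n -> c v < deg n r v.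
Proof.
move/has_in_arc; rewrite has_count deg_arc phiTC_arc => pos.
by rewrite -{1}[count (arc v) I]addn0 ltn_add2l.
Qed.

Lemma unstableE t v : (deg n r v <= load t v) =
  (count (arc^~ v) I <= count (fun w => toppled t w && adj n r v w) I).
Proof. by rewrite deg_arc /load phiTC_arc leq_add2l. Qed.

Lemma unstable_in_arcs_toppled t u :
    (forall w, toppled t w -> adj n r w u -> arc w u) -> deg n r u <= load t u ->
  forall w, arc w u -> toppled t w.
Proof.
move=> out_arcs; rewrite unstableE => le w awu.
have wI : w \in I by rewrite mem_iota /= ltnS; case/andP: (adj_le (arc_adj awu)).
have sub : {in I, subpred (fun w => toppled t w && adj n r u w) (arc^~ u)}.
  by move=> x _ /andP [tx aux]; apply: out_arcs; rewrite // adj_sym.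
by case/andP: (sub_in_count_eq sub le wI awu).
Qed.

Lemma toppled_arc t u v : toppled t u -> ~~ toppled t v -> adj n r u v -> arc u v.
Proof.
elim: t u v => // t IH u v; rewrite !toppledS negb_or => /orP [tu | bu] /andP [tv _] auv.
  exact: IH.
case: (posnP t) bu => [-> /eqP u0 | tpos bu].
  have c0v : cell n r 0 v by move: auv; rewrite u0 /adj /cell r0 /=; lia.
  by rewrite u0 arc_row // c0v; case: EW => ->.
have hu : 0 < u <= n by move: (bu); rewrite block_gt0 // => /and4P [-> ->].
move: bu; rewrite (blockE phiTC_stable) // => /and3P [_ ntu unst].
apply/negPn/negP => nauv; move/negP: tv; apply.
apply: (unstable_in_arcs_toppled _ unst).
  by move=> w tw; apply: IH.
by move: auv; rewrite (adj_arc _ _ T) (negbTE nauv).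
Qed.

Lemma stalled_toppled t : 0 < t -> ~~ has (block t) I -> ~~ has (block t.+1) I ->
  forall v, v <= n -> toppled t v.
Proof.
move=> tpos stall stall' v vn.
have nb s w : ~~ has (block s) I -> ~~ block s w.
  move=> /hasPn nbs; apply/negP => bsw.
  by move: (nbs w); rewrite mem_iota /= ltnS (block_le bsw) bsw => /(_ isT).
have same w : toppled t.+1 w = toppled t w by rewrite toppledS (negbTE (nb _ w stall)) orbF.
pose X v := (v <= n) && ~~ toppled t v.
suff closed x : X x -> exists2 u, X u & arc u x.
  by have := in_arc_closed_empty EW closed v; rewrite /X vn negbK.
(* An untoppled vertex x is stable at the next step s of its own type, so some
   in-neighbour of x has not toppled either. *)
case/andP=> xn tx.
have hx : 0 < x <= n.
  by rewrite xn andbT lt0n; apply: contraNneq tx => ->; rewrite toppled_sink.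
pose s := if r x == ~~ odd t then t else t.+1.
have sE w : toppled s w = toppled t w by rewrite /s; case: ifP.
have ps : r x == ~~ odd s by rewrite /s; case: ifP => //= /negbT; case: (r x); case: (odd t).
have : ~~ block s x by rewrite /s; case: ifP => _; apply: nb.
rewrite (blockE phiTC_stable) // ps sE tx /= unstableE -ltnNge.
case/ltn_count_has/hasP => u uI /andP [/negP tau axu].
have un : u <= n by move: uI; rewrite mem_iota /= ltnS.
exists u => //; rewrite /X un -sE /=.
by apply/negP => tu; apply: tau; rewrite tu adj_sym (arc_adj axu).
Qed.

Definition untoppled t := count (fun v => ~~ toppled t v) I.

Lemma untoppled_mono s t : s <= t -> untoppled t <= untoppled s.
Proof. by move=> st; apply: sub_count => v; apply: contra; apply: toppled_mono. Qed.

Lemma untoppled_decr t : 0 < t -> 0 < untoppled t -> untoppled t.+2 < untoppled t.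
Proof.
move=> tpos Ut.
case: (boolP (has (predU (block t) (block t.+1)) I)) => [/hasP [v vI btv] | ]; last first.
  rewrite has_predU negb_or => /andP [stall stall'].
  move: Ut; rewrite -has_count => /hasP [v]; rewrite mem_iota /= ltnS => vn.
  by rewrite stalled_toppled.
apply: sub_in_count_ltn => [w _ | ].
  by apply: contra; apply: toppled_mono (leqW (leqnSn t)).
have ntv : ~~ toppled t v.
  case/orP: btv => b; apply: contraL b => tv; apply: (toppled_not_block phiTC_stable) => //.
  exact: toppled_mono (leqnSn t) tv.
by apply/hasP; exists v; rewrite //= ntv negbK !toppledS; case/orP: btv => ->; rewrite ?orbT.
Qed.

Lemma untoppled_bound m : untoppled m.*2.+1 <= n - m.
Proof.
elim: m => [|m IH].
  rewrite subn0 /untoppled (_ : iota 0 n.+1 = 0 :: iota 1 n) //=.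
  by apply: leq_trans (count_size _ _) _; rewrite size_iota.
rewrite doubleS; case: (posnP (untoppled m.*2.+1)) => [U0 | Upos].
  by have := untoppled_mono (leqW (leqnSn m.*2.+1)); rewrite U0 leqn0 => /eqP ->.
by have := untoppled_decr (ltn0Sn _) Upos; lia.
Qed.

Lemma toppled_all v : v <= n -> toppled n.*2.+1 v.
Proof.
move=> vn; apply/negPn/negP => ntv.
have : 0 < untoppled n.*2.+1 by rewrite -has_count; apply/hasP; exists v; rewrite ?mem_iota.
by have := untoppled_bound n; rewrite subnn; lia.
Qed.

Lemma block_blk v : v <= n -> block (bk v) v.
Proof.
move=> vn; have /hasP [s sI bs] := toppled_all vn.
have hs : has (block^~ v) (iota 0 (2 * n + 3)).
  by apply/hasP; exists s; rewrite // mem_iota /=; move: sI; rewrite mem_iota /=; lia.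
have := hs; rewrite has_find size_iota => fl.
by have := nth_find 0 hs; rewrite nth_iota.
Qed.

Lemma block_uniq s t v : block s v -> block t v -> s = t.
Proof.
have toppled_later s' t' : s' < t' -> block s' v -> toppled t' v.
  by move=> st bs; apply/hasP; exists s'; rewrite // mem_iota.
move=> bs bt; case: (ltngtP s t) => // st.
  by have := toppled_not_block phiTC_stable (toppled_later _ _ st bs); rewrite bt.
by have := toppled_not_block phiTC_stable (toppled_later _ _ st bt); rewrite bs.
Qed.

Lemma block_blkE t v : v <= n -> block t v = (t == bk v).
Proof.
move=> vn; apply/idP/eqP => [bt | ->]; last exact: block_blk.
exact: block_uniq bt (block_blk vn).
Qed.

Lemma toppled_blkE t v : v <= n -> toppled t v = (bk v < t).
Proof.
move=> vn; rewrite /toppled (eq_has (a2 := pred1 (bk v))) => [|s]; last exact: block_blkE.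
by rewrite has_pred1 mem_iota.
Qed.

Lemma blk0 : bk 0 = 0.
Proof. by apply/eqP; rewrite eq_sym -block_blkE. Qed.

Lemma blk_eq0 v : v <= n -> (bk v == 0) = (v == 0).
Proof.
move=> vn; apply/eqP/eqP => [bv | ->]; last exact: blk0.
by have := block_blk vn; rewrite bv => /eqP.
Qed.

Lemma odd_blk v : v <= n -> odd (bk v) = ~~ r v.
Proof.
move=> vn; have := block_blk vn.
case: (posnP (bk v)) => [-> /eqP -> | bpos]; first by rewrite r0.
by rewrite block_gt0 // => /and4P [_ _ /eqP -> _]; rewrite negbK.
Qed.

Lemma arcE u v : arc u v = adj n r u v && (bk u < bk v).
Proof.
case: (boolP (adj n r u v)) => [auv | nauv]; last first.
  by apply/negbTE; apply: contra nauv; apply: arc_adj.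
have /andP [un vn] := adj_le auv; case: (ltngtP (bk u) (bk v)) => [uv | vu | E].
- by apply: (@toppled_arc (bk v)) auv; rewrite toppled_blkE ?ltnn.
- apply/negbTE/arc_asym; apply: (@toppled_arc (bk u)); rewrite ?toppled_blkE ?ltnn //.
  by rewrite adj_sym.
- by move: (adj_r auv); rewrite -(negbK (r u)) -(negbK (r v)) -!odd_blk // E; case: (odd _).
Qed.

Lemma T_blk i k : cell n r i k -> T i k = (bk i < bk k).
Proof.
move=> cik; have [ri _ _ _] := and4P cik.
by have := arcE i k; rewrite arc_row // cik cell_adj.
Qed.

Lemma blk_pred_adj v : 0 < v <= n -> exists2 u, adj n r u v & bk u = (bk v).-1.
Proof.
move=> hv; have /andP [v0 vn] := hv.
have := block_blk vn; rewrite (blockE phiTC_stable) // => /and3P [pv _ unst].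
case E: (bk v) pv unst => [|[|t]] pv unst.
- by move: v0; rewrite lt0n -(blk_eq0 vn) E.
- exists 0; last by rewrite blk0.
  by apply: cell_adj; rewrite /cell r0 v0 vn (eqP pv).
have ntv : ~~ toppled t v by rewrite toppled_blkE // E; lia.
have : ~~ block t v by rewrite block_blkE // E; lia.
move: pv; rewrite /= negbK => pv.
rewrite (blockE phiTC_stable) // pv ntv /= -ltnNge => st.
have : count (fun w => toppled t w && adj n r v w) I <
       count (fun w => toppled t.+2 w && adj n r v w) I.
  by move: st unst; rewrite /load; lia.
case/ltn_count_has/hasP => w _ /andP [ntw /andP [tw avw]].
have /andP [_ wn] := adj_le avw.
have := odd_blk wn; have := odd_blk vn; have := adj_r avw.
move: ntw tw; rewrite avw andbT !toppled_blkE // E => ntw tw.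
by exists w; [rewrite adj_sym | lia].
Qed.

Lemma blk_pred2 v : v <= n -> 1 < bk v -> exists u w,
  [/\ (u <= n) && (w <= n), r u = ~~ r v, r w = r v, bk u = (bk v).-1 & bk w = (bk v).-2].
Proof.
move=> vn bv; have pos x : x <= n -> 0 < bk x -> 0 < x <= n.
  by move=> xn; rewrite xn andbT !lt0n blk_eq0.
have [u auv eu] := blk_pred_adj (pos v vn (ltnW bv)).
have /andP [un _] := adj_le auv.
have hu : 0 < u <= n by apply: pos; rewrite // eu; lia.
have [w awu ew] := blk_pred_adj hu.
have /andP [wn _] := adj_le awu.
by exists u, w; rewrite un wn (adj_r awu) (adj_r auv) negbK ew eu.
Qed.

Lemma cornersupport_far j k : cell n r j k ->
  ((bk j).+1 < bk k) || ((bk k).+1 < bk j) -> cornersupport n r T j k.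
Proof.
move=> cjk; rewrite /cornersupport /supp (T_blk cjk).
have [rj rk jk kn] := and4P cjk; have jn : j <= n := leq_trans (ltnW jk) kn.
have := odd_blk jn; have := odd_blk kn; rewrite rj (negbTE rk) {cjk jk} => pk pj.
have ne x y : bk x != bk y -> x != y by apply: contraNneq => ->.
case/orP => far; have far1 := leq_ltn_trans (ltn0Sn _) far.
- have [j' [k' [/andP [j'n k'n] rj' rk' e1 e2]]] := blk_pred2 kn far1.
  have := odd_blk k'n; rewrite rk' (negbTE rk) => pk'.
  apply/hasP; exists j'; rewrite ?mem_iota //; apply/hasP; exists k'; rewrite ?mem_iota //.
  have j'j : j' != j by apply: ne; rewrite e1; lia.
  have k'k : k' != k by apply: ne; rewrite e2; lia.
  by rewrite rj' rk' rk j'j k'k /= e1 e2; lia.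
- have [k' [j' [/andP [k'n j'n] rk' rj' e1 e2]]] := blk_pred2 jn far1.
  have := odd_blk k'n; rewrite rk' rj => pk'.
  apply/hasP; exists j'; rewrite ?mem_iota //; apply/hasP; exists k'; rewrite ?mem_iota //.
  have j'j : j' != j by apply: ne; rewrite e2; lia.
  have k'k : k' != k by apply: ne; rewrite e1; lia.
  by rewrite rj' rk' rj j'j k'k /= e1 e2; lia.
Qed.

Lemma cornersupportE j k : cell n r j k ->
  cornersupport n r T j k = ((bk j).+1 < bk k) || ((bk k).+1 < bk j).
Proof.
move=> cjk; apply/idP/idP; last exact: cornersupport_far.
have [rj rk _ kn] := and4P cjk.
rewrite /cornersupport /supp (T_blk cjk) {cjk}.
case/hasP => j' j'I /hasP [k' k'I /and5P [rj' _ rk' _ /and3P [h1 h2 h3]]].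
have j'n : j' <= n by move: j'I; rewrite mem_iota.
have := odd_blk j'n; have := odd_blk kn; rewrite rj' (negbTE rk).
by move: h1 h2 h3; lia.
Qed.

Lemma nu_in_arcs j : 0 < j <= n ->
  nu n r T j = count (fun u => arc u j && ((bk u).+1 == bk j)) I.
Proof.
move=> /andP [_ jn]; rewrite /nu; have := odd_blk jn.
case: (boolP (r j)) => rj pj; apply: eq_in_count => u; rewrite mem_iota /= ltnS => un.
- rewrite arc_rowV //; case cju: (cell n r j u) => //=.
  have := odd_blk un; have [_ ru _ _] := and4P cju.
  by rewrite (T_blk cju) (cornersupportE cju); move: ru; lia.
- rewrite arc_col //; case cuj: (cell n r u j) => //=.
  have := odd_blk un; have [ru _ _ _] := and4P cuj.
  by rewrite (T_blk cuj) (cornersupportE cuj); move: ru; lia.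
Qed.

Lemma mu_in_arcs j : 0 < j <= n ->
  mu n r c j = count (fun u => arc u j && ((bk u).+1 == bk j)) I.
Proof.
move=> /andP [j0 jn]; rewrite /mu /Vblk /Ublk; have := blk_eq0 jn; have := odd_blk jn.
by case: ifP => pj pr bj; apply: eq_in_count => u; rewrite mem_iota /= ltnS => un;
  have := odd_blk un; rewrite block_blkE // arcE /adj un jn /=; lia.
Qed.

End EWtabToppling.

Theorem lemma4p11 (n : nat) (r : nat -> bool) (T : nat -> nat -> bool) :
  r 0 = true -> r n = false -> EWtab n r T ->
  forall j, 0 < j <= n -> nu n r T j = mu n r (phiTC n r T) j.
Proof.
(* [r n = false] only says that F is an honest Ferrers diagram. *)
move=> r0 _ EW j hj.
by rewrite (nu_in_arcs r0 EW hj) (mu_in_arcs r0 EW hj).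
Qed.
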